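(* With the notation $\epsilon\in(0,4)$, $\mathcal{H}_\epsilon=\ell^2(\epsilon+4\mathbb{Z})$, $B(v)=\tfrac{27}{8}|v|\,\big||v+1|^{1/3}-|v-1|^{1/3}\big|^3$, $\tilde A(v)=|v|\,\big||v+1|-|v-1|\big|$, $(D\psi)(v)=\psi(v+2)-\psi(v-2)$, and $\hat\rho_1=-\tfrac{\rho_c}{8}D\,B\tilde A\,D$, $\hat\rho_2=-\tfrac{\rho_c}{8}B^{1/2}D\,\tilde A\,D\,B^{1/2}$ (functions acting by multiplication): $0$ is not an eigenvalue of $\hat\rho_1$ nor of $\hat\rho_2$, i.e. the equation $\hat\rho_i\psi=0$ has no nonzero normalizable solution $\psi\in\mathcal{H}_\epsilon$, so $\hat\rho_i$ is injective ($i=1,2$). *)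

From Stdlib Require Import Reals.
Open Scope R_scope.

(* |x|^{1/3}, with the convention 0^{1/3} = 0 (Stdlib's Rpower 0 y = 1). *)
Definition cbrt_abs (x : R) : R :=
  if Req_EM_T x 0 then 0 else Rpower (Rabs x) (1/3).

Definition Bfun (v : R) : R :=
  27/8 * Rabs v * (Rabs (cbrt_abs (v + 1) - cbrt_abs (v - 1))) ^ 3.

Definition Atil (v : R) : R :=
  Rabs v * Rabs (Rabs (v + 1) - Rabs (v - 1)).

Definition Dop (f : R -> R) (v : R) : R := f (v + 2) - f (v - 2).

Definition rho1 (rc : R) (f : R -> R) (v : R) : R :=
  - (rc / 8) * Dop (fun w => Bfun w * Atil w * Dop f w) v.

Definition rho2 (rc : R) (f : R -> R) (v : R) : R :=
  - (rc / 8) * sqrt (Bfun v) *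
    Dop (fun w => Atil w * Dop (fun u => sqrt (Bfun u) * f u) w) v.

Definition latt (eps : R) (n : Z) : R := eps + 4 * IZR n.

Definition lattice_summable (eps : R) (g : R -> R) : Prop :=
  exists l1 l2 : R,
    infinite_sum (fun k : nat => g (latt eps (Z.of_nat k))) l1 /\
    infinite_sum (fun k : nat => g (latt eps (- Z.of_nat k - 1)%Z)) l2.

From Stdlib Require Import Reals Lra Lia Psatz ZArith.
From Coquelicot Require Import Series Lim_seq.
Open Scope R_scope.

(* On the lattice x_n = eps + 4n the difference operator D samples a function at
   the midpoints y_n = x_n + 2, and for every weight w
       D (w * D f) (x_n) = Phi_n - Phi_(n-1),  Phi_n = w(y_n) (f(x_(n+1)) - f(x_n)),
   a discrete divergence of the flux Phi.  So rho_1 f = 0 (weight B*A~) and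
   rho_2 f = 0 (weight A~, acting on chi = B^(1/2) f) both say that the flux is
   constant along the lattice.  A square-summable f decays at both ends, and
   - for rho_1 the weight B*A~ is bounded by 8 on [2, oo), so the constant flux is
     dominated by the vanishing increments of f and must be 0;
   - for rho_2 the weight A~(y) = 2y grows linearly, so a nonzero constant flux
     would make chi grow like a harmonic sum (logarithmically), against chi -> 0.
   A zero flux through a weight vanishing only at y = 0 makes f constant on each
   half of the lattice, hence zero by decay.  The file proves the estimates on B
   and A~, then the facts on sequences, then the lattice calculus, and finally
   the theorem. *)

Lemma Rpower_third_cube (x : R) : 0 < x -> Rpower x (1/3) ^ 3 = x.
Proof.
  intro Hx. rewrite <- Rpower_pow by (unfold Rpower; apply exp_pos).
  rewrite Rpower_mult. replace (1/3 * INR 3) with 1 by (simpl; field).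
  now apply Rpower_1.
Qed.

Lemma cbrt_abs_cube (x : R) : cbrt_abs x ^ 3 = Rabs x.
Proof.
  unfold cbrt_abs. destruct (Req_EM_T x 0) as [->|Hx].
  - rewrite Rabs_R0. ring.
  - apply Rpower_third_cube, Rabs_pos_lt, Hx.
Qed.

Lemma cbrt_abs_pos (x : R) : x <> 0 -> 0 < cbrt_abs x.
Proof.
  intro Hx. unfold cbrt_abs. destruct (Req_EM_T x 0); [contradiction|].
  unfold Rpower. apply exp_pos.
Qed.

Lemma cbrt_abs_opp (x : R) : cbrt_abs (- x) = cbrt_abs x.
Proof.
  unfold cbrt_abs. rewrite Rabs_Ropp.
  destruct (Req_EM_T (- x) 0), (Req_EM_T x 0); auto; exfalso; lra.
Qed.

Lemma Bfun_even (w : R) : Bfun (- w) = Bfun w.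
Proof.
  unfold Bfun. rewrite Rabs_Ropp.
  replace (- w + 1) with (- (w - 1)) by ring. replace (- w - 1) with (- (w + 1)) by ring.
  rewrite !cbrt_abs_opp, Rabs_minus_sym. reflexivity.
Qed.

(* B vanishes only at 0: for w <> 0 we have |w+1| <> |w-1|, so the cube roots differ. *)
Lemma Bfun_pos (w : R) : w <> 0 -> 0 < Bfun w.
Proof.
  intro Hw. unfold Bfun.
  assert (Hne : cbrt_abs (w + 1) - cbrt_abs (w - 1) <> 0).
  { intro E. assert (Habs : Rabs (w + 1) = Rabs (w - 1)).
    { rewrite <- !cbrt_abs_cube. replace (cbrt_abs (w + 1)) with (cbrt_abs (w - 1)) by lra.
      reflexivity. }
    revert Habs. unfold Rabs; repeat destruct Rcase_abs; lra. }
  apply Rabs_pos_lt in Hw. apply Rabs_pos_lt in Hne.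
  apply Rmult_lt_0_compat; [nra | now apply pow_lt].
Qed.

(* Decay of B: with a^3 = w+1, b^3 = w-1 one has (a-b)(a^2+ab+b^2) = 2 and
   a^2+ab+b^2 >= 3b^2, hence a - b <= 2/(3b^2) and B(w) (w-1)^2 <= w. *)
Lemma Bfun_decay (w : R) : 1 < w -> Bfun w * (w - 1) ^ 2 <= w.
Proof.
  intro Hw.
  pose proof (cbrt_abs_pos (w + 1) ltac:(lra)) as Ha.
  pose proof (cbrt_abs_pos (w - 1) ltac:(lra)) as Hb.
  pose proof (cbrt_abs_cube (w + 1)) as Ha3. pose proof (cbrt_abs_cube (w - 1)) as Hb3.
  rewrite Rabs_right in Ha3, Hb3 by lra.
  unfold Bfun. set (a := cbrt_abs (w + 1)) in *. set (b := cbrt_abs (w - 1)) in *.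
  assert (Hfactor : (a - b) * (a * a + a * b + b * b) = 2) by nra.
  assert (Hd : 0 < a - b).
  { assert (0 < a * a + a * b + b * b) by nra. nra. }
  assert (Hdiff : 0 <= (a - b) * (3 * (b * b)) <= 2).
  { split; [apply Rmult_le_pos; nra|].
    assert (Hsq : 0 <= (a - b) * (a - b) * (a + 2 * b)) by (apply Rmult_le_pos; nra).
    clear -Hfactor Hsq. nra. }
  assert (Hcube : ((a - b) * (3 * (b * b))) ^ 3 <= 2 ^ 3) by (apply pow_incr; exact Hdiff).
  rewrite (Rabs_right w), (Rabs_right (a - b)) by lra.
  replace (27 / 8 * w * (a - b) ^ 3 * (w - 1) ^ 2)
    with (w / 8 * ((a - b) * (3 * (b * b))) ^ 3) by (rewrite <- Hb3; field).
  nra.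
Qed.

Lemma Atil_pos (w : R) : w <> 0 -> 0 < Atil w.
Proof.
  intro Hw. unfold Atil. apply Rmult_lt_0_compat; [now apply Rabs_pos_lt|].
  apply Rabs_pos_lt. unfold Rabs; repeat destruct Rcase_abs; lra.
Qed.

Lemma Atil_linear (w : R) : 1 <= w -> Atil w = 2 * w.
Proof.
  intro Hw. unfold Atil.
  rewrite (Rabs_right w), (Rabs_right (w + 1)), (Rabs_right (w - 1)) by lra.
  replace (w + 1 - (w - 1)) with 2 by ring. rewrite Rabs_right by lra. ring.
Qed.

Lemma BAtil_bound (w : R) : 2 <= w -> Rabs (Bfun w * Atil w) <= 8.
Proof.
  intro Hw. pose proof (Bfun_pos w ltac:(lra)) as HB. pose proof (Bfun_decay w ltac:(lra)).
  rewrite Atil_linear, Rabs_right by nra.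
  assert (0 <= Bfun w * ((w - 1) ^ 2 - w ^ 2 / 4)) by (apply Rmult_le_pos; nra). nra.
Qed.

Lemma sqrt_Bfun_bound (v : R) : 2 <= Rabs v -> sqrt (Bfun v) <= 2.
Proof.
  intro Hv.
  assert (HB : Bfun v <= 4).
  { assert (Hw : Bfun v = Bfun (Rabs v)).
    { unfold Rabs. destruct Rcase_abs; [now rewrite Bfun_even | reflexivity]. }
    rewrite Hw. set (w := Rabs v) in *.
    pose proof (Bfun_pos w ltac:(lra)). pose proof (Bfun_decay w ltac:(lra)).
    assert (0 <= Bfun w * ((w - 1) ^ 2 - w / 4)) by (apply Rmult_le_pos; nra). nra. }
  rewrite <- sqrt_square by lra. apply sqrt_le_1_alt. lra.
Qed.

Lemma series_terms_cv0 (u : nat -> R) (l : R) : infinite_sum u l -> Un_cv u 0.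
Proof.
  intro Hu. apply is_lim_seq_Reals, ex_series_lim_0. exists l. now apply is_series_Reals.
Qed.

Lemma cv0_square_dominated (a u : nat -> R) :
  (forall k, a k ^ 2 <= u k) -> Un_cv u 0 -> Un_cv a 0.
Proof.
  intros Hle Hu e He. destruct (Hu (e * e)) as [N HN]; [nra|].
  exists N. intros n Hn. specialize (HN n Hn). specialize (Hle n).
  unfold R_dist in *. rewrite Rminus_0_r in *.
  revert HN. unfold Rabs; repeat destruct Rcase_abs; nra.
Qed.

Lemma cv0_sum_squares (a b : nat -> R) :
  Un_cv (fun k => a k ^ 2 + b k ^ 2) 0 -> Un_cv a 0 /\ Un_cv b 0.
Proof.
  intro Hab. split; refine (cv0_square_dominated _ _ _ Hab); intro k;
    [pose proof (pow2_ge_0 (b k)) | pose proof (pow2_ge_0 (a k))]; lra.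
Qed.

Lemma cv0_bounded_mult (b u : nat -> R) (M : R) (N : nat) :
  (forall k, (N <= k)%nat -> Rabs (b k) <= M) -> Un_cv u 0 ->
  Un_cv (fun k => b k * u k) 0.
Proof.
  intros Hb Hu e He.
  destruct (Hu (e / (Rabs M + 1))) as [N' HN'].
  { apply Rdiv_lt_0_compat; [lra|]. pose proof (Rabs_pos M). lra. }
  exists (N + N')%nat. intros n Hn.
  specialize (HN' n ltac:(lia)). specialize (Hb n ltac:(lia)).
  unfold R_dist in *. rewrite Rminus_0_r in *. rewrite Rabs_mult.
  pose proof (Rabs_pos M). pose proof (Rabs_pos (u n)). pose proof (Rle_abs M).
  apply Rmult_lt_compat_r with (r := Rabs M + 1) in HN'; [|lra].
  replace (e / (Rabs M + 1) * (Rabs M + 1)) with e in HN' by (field; lra).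
  nra.
Qed.

Lemma cv0_const (c : R) (v : nat -> R) : (forall k, c = v k) -> Un_cv v 0 -> c = 0.
Proof.
  intros Hc Hv. apply (UL_sequence v); [|exact Hv].
  intros e He. exists 0%nat. intros n _. rewrite <- Hc. unfold R_dist.
  rewrite Rminus_diag, Rabs_R0. exact He.
Qed.

Lemma stationary_cv0 (u : nat -> R) : (forall k, u (S k) = u k) -> Un_cv u 0 ->
  forall k, u k = 0.
Proof.
  intros Hs Hu k.
  assert (Hconst : forall j, u j = u 0%nat) by (induction j; [reflexivity | now rewrite Hs]).
  rewrite (Hconst k). apply (cv0_const _ u); [intro j; now rewrite (Hconst j) | exact Hu].
Qed.

(* A constant flux c = a_k (u_(k+1) - u_k) through a bounded weight a vanishes
   when u -> 0, since the increments of u tend to 0. *)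
Lemma const_flux_bounded_weight (a u : nat -> R) (c M : R) :
  (forall k, c = a k * (u (S k) - u k)) -> (forall k, Rabs (a k) <= M) -> Un_cv u 0 ->
  c = 0.
Proof.
  intros Hc Ha Hu. apply (cv0_const c _ Hc).
  apply (cv0_bounded_mult a _ M 0); [intros k _; apply Ha|].
  replace 0 with (0 - 0) by ring. apply CV_minus; [|exact Hu].
  intros e He. destruct (Hu e He) as [N HN]. exists N. intros n Hn. apply HN. lia.
Qed.

(* A constant flux through positive weights whose reciprocals have unbounded
   partial sums vanishes when u converges: u_(k+1) - u_0 = c * sum_(j<=k) 1/a_j
   stays bounded. *)
Lemma const_flux_divergent_weight (a u : nat -> R) (c : R) :
  (forall k, 0 < a k) -> (forall k, c = a k * (u (S k) - u k)) ->
  (forall M, exists k, M < sum_f_R0 (fun j => / a j) k) -> Un_cv u 0 -> c = 0.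
Proof.
  intros Ha Hc Hdiv Hu.
  assert (Hsum : forall k, u (S k) - u 0%nat = c * sum_f_R0 (fun j => / a j) k).
  { intro k. induction k as [|k IH]; simpl.
    - rewrite (Hc 0%nat). field. apply Rgt_not_eq, Ha.
    - rewrite Rmult_plus_distr_l, <- IH, (Hc (S k)). field. apply Rgt_not_eq, Ha. }
  destruct (maj_by_pos u (exist _ 0 Hu)) as [L [HL Hbd]].
  destruct (Req_dec c 0) as [|Hc0]; [assumption | exfalso].
  assert (Hcpos : 0 < Rabs c) by now apply Rabs_pos_lt.
  destruct (Hdiv (2 * L / Rabs c)) as [k Hk].
  assert (Hpos : 0 <= sum_f_R0 (fun j => / a j) k).
  { apply cond_pos_sum. intro j. left. apply Rinv_0_lt_compat, Ha. }
  assert (Hgrowth : Rabs c * sum_f_R0 (fun j => / a j) k <= 2 * L).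
  { rewrite <- (Rabs_right (sum_f_R0 _ k)), <- Rabs_mult, <- Hsum by lra.
    pose proof (Rabs_triang (u (S k)) (- u 0%nat)) as Htri. rewrite Rabs_Ropp in Htri.
    pose proof (Hbd (S k)). pose proof (Hbd 0%nat). unfold Rminus. lra. }
  apply (Rmult_lt_compat_l (Rabs c)) in Hk; [|exact Hcpos].
  replace (Rabs c * (2 * L / Rabs c)) with (2 * L) in Hk by (field; lra). lra.
Qed.

(* ln(x + p) - ln x <= p/x, from 1 + t < exp t. *)
Lemma ln_increment_bound (x p : R) : 0 < x -> 0 < p -> (ln (x + p) - ln x) / p <= / x.
Proof.
  intros Hx Hp. assert (Hq : 0 < p / x) by (apply Rdiv_lt_0_compat; lra).
  replace (x + p) with (x * (1 + p / x)) by (field; lra).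
  rewrite ln_mult by lra.
  assert (Hlt : ln (1 + p / x) < ln (exp (p / x))).
  { apply ln_increasing; [lra|]. apply exp_ineq1. lra. }
  rewrite ln_exp in Hlt.
  replace (/ x) with (p / x / p) by (field; lra).
  apply Rmult_le_compat_r; [left; apply Rinv_0_lt_compat, Hp | lra].
Qed.

(* Integral-test lower bound for the partial sums of 1/(p j + q). *)
Lemma inverse_linear_sum_lower (p q : R) : 0 < p -> 0 < q -> forall k,
  (ln (p * INR (S k) + q) - ln q) / p <= sum_f_R0 (fun j => / (p * INR j + q)) k.
Proof.
  intros Hp Hq k. induction k as [|k IH].
  - simpl. rewrite Rmult_1_r, Rmult_0_r, Rplus_0_l, Rplus_comm.
    now apply ln_increment_bound.
  - rewrite tech5. pose proof (pos_INR (S k)).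
    assert (Hx : 0 < p * INR (S k) + q) by nra.
    pose proof (ln_increment_bound _ p Hx Hp) as Hstep.
    replace (p * INR (S (S k)) + q) with (p * INR (S k) + q + p) by (rewrite (S_INR (S k)); ring).
    replace ((ln (p * INR (S k) + q + p) - ln q) / p)
      with ((ln (p * INR (S k) + q + p) - ln (p * INR (S k) + q)) / p
            + (ln (p * INR (S k) + q) - ln q) / p) by (field; lra).
    lra.
Qed.

Lemma inverse_linear_sum_unbounded (p q : R) : 0 < p -> 0 < q ->
  forall M, exists k, M < sum_f_R0 (fun j => / (p * INR j + q)) k.
Proof.
  intros Hp Hq M. destruct (INR_unbounded (exp (p * M + ln q) / p)) as [k Hk].
  exists k. eapply Rlt_le_trans; [|apply inverse_linear_sum_lower; assumption].
  apply (Rmult_lt_reg_l p); [exact Hp|].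
  replace (p * ((ln (p * INR (S k) + q) - ln q) / p)) with (ln (p * INR (S k) + q) - ln q)
    by (field; lra).
  assert (Hbig : exp (p * M + ln q) < p * INR (S k) + q).
  { rewrite S_INR. apply (Rmult_lt_compat_l p) in Hk; [|exact Hp].
    replace (p * (exp (p * M + ln q) / p)) with (exp (p * M + ln q)) in Hk by (field; lra).
    nra. }
  apply ln_increasing in Hbig; [|apply exp_pos]. rewrite ln_exp in Hbig. lra.
Qed.

Definition lattice_decay (eps : R) (f : R -> R) : Prop :=
  Un_cv (fun k => f (latt eps (Z.of_nat k))) 0 /\
  Un_cv (fun k => f (latt eps (- Z.of_nat k - 1)%Z)) 0.

Lemma latt_succ (eps : R) (n : Z) : latt eps (n + 1) = latt eps n + 4.
Proof. unfold latt. rewrite plus_IZR. ring. Qed.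

Lemma latt_pred (eps : R) (n : Z) : latt eps (n - 1) = latt eps n - 4.
Proof. unfold latt. rewrite minus_IZR. ring. Qed.

Lemma latt_nat (eps : R) (k : nat) : latt eps (Z.of_nat k) = eps + 4 * INR k.
Proof. unfold latt. now rewrite INR_IZR_INZ. Qed.

Lemma latt_neg (eps : R) (k : nat) : latt eps (- Z.of_nat k - 1) = eps - 4 * INR k - 4.
Proof. unfold latt. rewrite minus_IZR, opp_IZR, <- INR_IZR_INZ. ring. Qed.

Lemma latt_ne0 (eps : R) (n : Z) : 0 < eps < 4 -> latt eps n <> 0.
Proof.
  intro He. unfold latt. destruct (Z_le_gt_dec 0 n) as [Hn|Hn].
  - apply IZR_le in Hn. lra.
  - assert (IZR n <= -1) by (apply IZR_le; lia). lra.
Qed.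

(* ... and the only midpoint that can be the origin is y_(-1) (when eps = 2). *)
Lemma latt_mid_ne0 (eps : R) (n : Z) : 0 < eps < 4 -> n <> (-1)%Z -> latt eps n + 2 <> 0.
Proof.
  intros He Hn. unfold latt. destruct (Z_le_gt_dec 0 n) as [Hn'|Hn'].
  - apply IZR_le in Hn'. lra.
  - assert (IZR n <= -2) by (apply IZR_le; lia). lra.
Qed.

Lemma summable_decay (eps : R) (re im : R -> R) :
  lattice_summable eps (fun v => re v ^ 2 + im v ^ 2) ->
  lattice_decay eps re /\ lattice_decay eps im.
Proof.
  intros [l1 [l2 [Hpos Hneg]]].
  apply series_terms_cv0 in Hpos. apply series_terms_cv0 in Hneg.
  apply cv0_sum_squares in Hpos as [Hre1 Him1]. apply cv0_sum_squares in Hneg as [Hre2 Him2].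
  split; split; assumption.
Qed.

Lemma decay_sqrt_Bfun (eps : R) (f : R -> R) : 0 < eps < 4 ->
  lattice_decay eps f -> lattice_decay eps (fun v => sqrt (Bfun v) * f v).
Proof.
  intros He [Hpos Hneg].
  assert (Hbound : forall x, 2 <= Rabs x -> Rabs (sqrt (Bfun x)) <= 2).
  { intros x Hx. rewrite Rabs_right by apply Rle_ge, sqrt_pos. now apply sqrt_Bfun_bound. }
  split; apply (cv0_bounded_mult _ _ 2 1); try assumption; intros k Hk; apply Hbound;
    assert (1 <= INR k) by (change 1 with (INR 1); apply le_INR; lia).
  - rewrite latt_nat, Rabs_right; lra.
  - rewrite latt_neg, Rabs_left; lra.
Qed.

Lemma halves_constant_vanish (eps : R) (f : R -> R) : lattice_decay eps f ->
  (forall n, n <> (-1)%Z -> f (latt eps (n + 1)) = f (latt eps n)) ->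
  forall n, f (latt eps n) = 0.
Proof.
  intros [Hpos Hneg] Hstep.
  assert (Hnat : forall k, f (latt eps (Z.of_nat k)) = 0).
  { apply stationary_cv0; [|exact Hpos]. intro k.
    rewrite Nat2Z.inj_succ. apply Hstep. lia. }
  assert (Hnegk : forall k, f (latt eps (- Z.of_nat k - 1)%Z) = 0).
  { apply stationary_cv0; [|exact Hneg]. intro k.
    replace (- Z.of_nat k - 1)%Z with ((- Z.of_nat (S k) - 1) + 1)%Z by lia.
    symmetry. apply Hstep. lia. }
  intro n. destruct (Z_le_gt_dec 0 n).
  - rewrite <- (Z2Nat.id n) by lia. apply Hnat.
  - replace n with (- Z.of_nat (Z.to_nat (- n - 1)) - 1)%Z by lia. apply Hnegk.
Qed.

Definition flux (eps : R) (w f : R -> R) (n : Z) : R :=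
  w (latt eps n + 2) * (f (latt eps (n + 1)) - f (latt eps n)).

Lemma Dop_weighted_latt (eps : R) (w f : R -> R) (n : Z) :
  Dop (fun x => w x * Dop f x) (latt eps n) = flux eps w f n - flux eps w f (n - 1).
Proof.
  unfold Dop, flux. rewrite Z.sub_add, latt_succ, latt_pred.
  replace (latt eps n + 2 + 2) with (latt eps n + 4) by ring.
  replace (latt eps n + 2 - 2) with (latt eps n) by ring.
  replace (latt eps n - 2 + 2) with (latt eps n) by ring.
  replace (latt eps n - 2 - 2) with (latt eps n - 4) by ring.
  replace (latt eps n - 4 + 2) with (latt eps n - 2) by ring.
  reflexivity.
Qed.

Lemma Z_stationary (F : Z -> R) : (forall n, F (n + 1)%Z = F n) -> forall n, F n = F 0%Z.
Proof.
  intros H n. induction n as [|n IH|n IH] using Z.peano_ind.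
  - reflexivity.
  - unfold Z.succ. now rewrite H.
  - rewrite <- IH, <- (H (Z.pred n)). now rewrite Z.add_1_r, Z.succ_pred.
Qed.

Lemma flux_constant (eps : R) (w f : R -> R) :
  (forall n, Dop (fun x => w x * Dop f x) (latt eps n) = 0) ->
  forall n, flux eps w f n = flux eps w f 0.
Proof.
  intro Hdiv. apply Z_stationary. intro n.
  specialize (Hdiv (n + 1)%Z). rewrite Dop_weighted_latt, Z.add_simpl_r in Hdiv. lra.
Qed.

Lemma zero_flux_vanish (eps : R) (w f : R -> R) : 0 < eps < 4 ->
  (forall y, y <> 0 -> w y <> 0) -> lattice_decay eps f ->
  (forall n, flux eps w f n = 0) -> forall n, f (latt eps n) = 0.
Proof.
  intros He Hw Hf Hflux. apply (halves_constant_vanish _ _ Hf). intros n Hn.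
  specialize (Hflux n). unfold flux in Hflux.
  apply Rmult_integral in Hflux as [Hwn|Hdiff]; [|lra].
  exfalso. exact (Hw _ (latt_mid_ne0 eps n He Hn) Hwn).
Qed.

(* Kernel of rho_1: the bounded weight B*A~ forces the constant flux to be 0. *)
Lemma rho1_kernel (eps rc : R) (f : R -> R) : 0 < eps < 4 -> 0 < rc ->
  lattice_decay eps f -> (forall n, rho1 rc f (latt eps n) = 0) ->
  forall n, f (latt eps n) = 0.
Proof.
  intros He Hrc Hf Hrho.
  assert (Hdiv : forall n,
    Dop (fun x => (fun y => Bfun y * Atil y) x * Dop f x) (latt eps n) = 0).
  { intro n. specialize (Hrho n). unfold rho1 in Hrho.
    apply Rmult_integral in Hrho as [Hc|Hd]; [lra | exact Hd]. }
  pose proof (flux_constant _ _ _ Hdiv) as Hconst.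
  assert (Hflux0 : flux eps (fun y => Bfun y * Atil y) f 0 = 0).
  { destruct Hf as [Hpos _].
    apply (const_flux_bounded_weight
             (fun k => Bfun (latt eps (Z.of_nat k) + 2) * Atil (latt eps (Z.of_nat k) + 2))
             (fun k => f (latt eps (Z.of_nat k))) _ 8); [| |exact Hpos].
    - intro k. rewrite <- (Hconst (Z.of_nat k)). unfold flux. now rewrite Nat2Z.inj_succ.
    - intro k. apply BAtil_bound. rewrite latt_nat. pose proof (pos_INR k). lra. }
  apply (zero_flux_vanish eps (fun y => Bfun y * Atil y) f He); [|exact Hf|].
  - intros y Hy. apply Rmult_integral_contrapositive_currified;
      apply Rgt_not_eq; [apply Bfun_pos | apply Atil_pos]; exact Hy.
  - intro n. rewrite Hconst. exact Hflux0.
Qed.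

(* Kernel of rho_2: chi = B^(1/2) f decays and the linearly growing weight A~
   forces the constant flux to be 0; then chi = 0, and B^(1/2) > 0 on the lattice. *)
Lemma rho2_kernel (eps rc : R) (f : R -> R) : 0 < eps < 4 -> 0 < rc ->
  lattice_decay eps f -> (forall n, rho2 rc f (latt eps n) = 0) ->
  forall n, f (latt eps n) = 0.
Proof.
  intros He Hrc Hf Hrho.
  assert (Hsqrt : forall n, sqrt (Bfun (latt eps n)) <> 0).
  { intro n. apply Rgt_not_eq, sqrt_lt_R0, Bfun_pos, latt_ne0, He. }
  assert (Hdiv : forall n,
    Dop (fun x => Atil x * Dop (fun u => sqrt (Bfun u) * f u) x) (latt eps n) = 0).
  { intro n. specialize (Hrho n). unfold rho2 in Hrho.
    apply Rmult_integral in Hrho as [Hc|Hd]; [|exact Hd].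
    apply Rmult_integral in Hc as [Hc|Hc]; [lra | contradiction (Hsqrt n)]. }
  pose proof (flux_constant _ _ _ Hdiv) as Hconst.
  pose proof (decay_sqrt_Bfun eps f He Hf) as Hchi.
  assert (Hflux0 : flux eps Atil (fun u => sqrt (Bfun u) * f u) 0 = 0).
  { destruct Hchi as [Hpos _].
    apply (const_flux_divergent_weight (fun k => 8 * INR k + (2 * eps + 4))
             (fun k => sqrt (Bfun (latt eps (Z.of_nat k))) * f (latt eps (Z.of_nat k))));
      [| | apply inverse_linear_sum_unbounded; lra | exact Hpos].
    - intro k. pose proof (pos_INR k). lra.
    - intro k. rewrite <- (Hconst (Z.of_nat k)). unfold flux. rewrite Nat2Z.inj_succ.
      pose proof (pos_INR k).
      rewrite Atil_linear, latt_nat; [unfold Z.succ; ring | rewrite latt_nat; lra]. }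
  intro n.
  assert (Hz : sqrt (Bfun (latt eps n)) * f (latt eps n) = 0).
  { apply (zero_flux_vanish eps Atil (fun u => sqrt (Bfun u) * f u) He); [|exact Hchi|].
    - intros y Hy. apply Rgt_not_eq, Atil_pos, Hy.
    - intro m. rewrite Hconst. exact Hflux0. }
  apply Rmult_integral in Hz as [Hz|Hz]; [contradiction (Hsqrt n) | exact Hz].
Qed.

(* Main theorem: a square-summable complex psi = re + i im in the kernel of
   rho_1 or rho_2 is zero (both operators are real, so they act on re and im
   separately). *)
Theorem mainTheorem4 :
  forall (eps rc : R), 0 < eps < 4 -> 0 < rc ->
  forall re im : R -> R,
    lattice_summable eps (fun v => re v ^ 2 + im v ^ 2) ->
    ((forall n : Z, rho1 rc re (latt eps n) = 0 /\ rho1 rc im (latt eps n) = 0) ->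
       forall n : Z, re (latt eps n) = 0 /\ im (latt eps n) = 0) /\
    ((forall n : Z, rho2 rc re (latt eps n) = 0 /\ rho2 rc im (latt eps n) = 0) ->
       forall n : Z, re (latt eps n) = 0 /\ im (latt eps n) = 0).
Proof.
  intros eps rc He Hrc re im Hsum.
  destruct (summable_decay eps re im Hsum) as [Hre Him].
  split; intros Hker n; split.
  - apply (rho1_kernel eps rc re He Hrc Hre). intro m. apply Hker.
  - apply (rho1_kernel eps rc im He Hrc Him). intro m. apply Hker.
  - apply (rho2_kernel eps rc re He Hrc Hre). intro m. apply Hker.
  - apply (rho2_kernel eps rc im He Hrc Him). intro m. apply Hker.
Qed.
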